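(* Consider a matched pair study and assume Fisher's null $H_0$ holds. Let $\alpha\in(0,1)$ and, for $\Gamma_0\in[1,\infty]$ and $1\le k\le I$, let $\mathcal S_{\Gamma_0;k}=\{\Gamma\in[1,\infty]^I:\Gamma_{(k)}\le\Gamma_0\}$, where $\Gamma_{(k)}$ is the $k$th smallest coordinate of $\Gamma$. Then $$\bigcap_{k=1}^I\ \bigcap_{\Gamma_0:\overline p_{\Gamma_0;k}\le\alpha}\mathcal S_{\Gamma_0;k}^c=\bigcap_{\Gamma_0\ge1}\ \bigcap_{k:\overline p_{\Gamma_0;k}\le\alpha}\mathcal S_{\Gamma_0;k}^c=\bigcap_{(\Gamma_0,k):\overline p_{\Gamma_0;k}\le\alpha}\mathcal S_{\Gamma_0;k}^c,$$ where the first expression is the intersection over $k$ of the confidence sets $\{\Gamma^\star_{(k)}\in\{\Gamma_0:\overline p_{\Gamma_0;k}>\alpha\}\}$ rewritten as sets of $\Gamma^\star$ and the second is the intersection over $\Gamma_0$ of the confidence sets $\{I^\star(\Gamma_0)\in\{I-k:\overline p_{\Gamma_0;k}>\alpha\}\}$ rewritten as sets of $\Gamma^\star$. Moreover, $\mathbb P\big(\Gamma^\star\in\bigcap_{(\Gamma_0,k):\overline p_{\Gamma_0;k}\le\alpha}\mathcal S_{\Gamma_0;k}^c\big)\ge1-\alpha$; equivalently, with probability at least $1-\alpha$, $\overline p_{\Gamma^\star_{(k)};k}>\alpha$ simultaneously for all $1\le k\le I$.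
   Context: Setting: $I$ matched pairs, potential outcomes fixed, $Z$ (one treated unit per pair) is the only randomness with true mechanism $\mathbb P(Z=z)=\prod_i\prod_j(p^\star_{ij})^{z_{ij}}$, $p^\star_{i1}+p^\star_{i2}=1$; true hidden bias $\Gamma^\star_i=\max_jp^\star_{ij}/\min_kp^\star_{ik}\in[1,\infty]$, $\Gamma^\star=(\Gamma^\star_1,\dots,\Gamma^\star_I)$, $\Gamma^\star_{(k)}$ its $k$th smallest value, $I^\star(\Gamma_0)=\#\{i:\Gamma^\star_i>\Gamma_0\}$. Fisher's null $H_0$: $Y_{ij}(1)=Y_{ij}(0)$ for all $i,j$. $T=\sum_i\sum_jZ_{ij}q_{ij}$ with $q_{ij}$ fixed functions of $Y(0)$. Fix an ordering of pairs by nondecreasing $|q_{i1}-q_{i2}|$; $\mathcal I_k$ is the first $k$ pairs. $\overline T(\Gamma_0;k)$ is a sum of independent variables: for $i\in\mathcal I_k$ it equals $\max\{q_{i1},q_{i2}\}$ with probability $\Gamma_0/(1+\Gamma_0)$ (probability 1 if $\Gamma_0=\infty$) and $\min\{q_{i1},q_{i2}\}$ otherwise; for $i\notin\mathcal I_k$ it equals $\max\{q_{i1},q_{i2}\}$ with probability 1. $\overline p_{\Gamma_0;k}=\mathbb P(\overline T(\Gamma_0;k)\ge c)|_{c=T}$; $\mathcal S^c$ denotes the complement in $[1,\infty]^I$. *)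

From HB Require Import structures.
From mathcomp Require Import all_boot all_order all_algebra fingroup perm.
From mathcomp Require Import boolp classical_sets constructive_ereal reals.
Set Implicit Arguments. Unset Strict Implicit. Unset Printing Implicit Defensive.
Import Order.TTheory GRing.Theory Num.Theory.
Local Open Scope ring_scope.
Local Open Scope classical_set_scope.

Section MatchedPairs.
Variables (R : realType) (n : nat).

(* A treatment assignment: z i is the index (0 or 1, i.e. unit j=1 or j=2)
   of the treated unit in pair i.  (Z_{ij} = 1 iff z i = j.) *)
Definition assignment := {ffun 'I_n -> 'I_2}.

Definition is_mechanism (p : 'I_n -> 'I_2 -> R) : Prop :=
  (forall i j, 0 <= p i j) /\ (forall i, \sum_(j < 2) p i j = 1).

(* P(E) under P(Z = z) = prod_i prod_j (p_ij)^{z_ij} = prod_i p i (z i). *)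
Definition prob (p : 'I_n -> 'I_2 -> R) (E : assignment -> Prop) : R :=
  \sum_(z : assignment | `[< E z >]) \prod_(i < n) p i (z i).

Definition gamma_star (p : 'I_n -> 'I_2 -> R) (i : 'I_n) : \bar R :=
  let mx := Num.max (p i ord0) (p i ord_max) in
  let mn := Num.min (p i ord0) (p i ord_max) in
  if mn == 0 then +oo%E else (mx / mn)%:E.

Definition T (q : 'I_n -> 'I_2 -> R) (z : assignment) : R :=
  \sum_(i < n) q i (z i).

Definition qmax (q : 'I_n -> 'I_2 -> R) i := Num.max (q i ord0) (q i ord_max).
Definition qmin (q : 'I_n -> 'I_2 -> R) i := Num.min (q i ord0) (q i ord_max).

(* rk is an ordering of the pairs (rk i = position of pair i, 0-based) by
   nondecreasing |q_i1 - q_i2|; I_k = {i | rk i < k} = first k pairs. *)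
Definition ordered_by_absdiff (q : 'I_n -> 'I_2 -> R) (rk : {perm 'I_n}) : Prop :=
  forall i j : 'I_n, (rk i < rk j)%N ->
    `|q i ord0 - q i ord_max| <= `|q j ord0 - q j ord_max|.

Definition theta (G0 : \bar R) : R :=
  match G0 with
  | (g%:E)%E => g / (1 + g)
  | (+oo)%E => 1
  | (-oo)%E => 0
  end.

(* Law of the independent components of Tbar(Gamma0;k): b i = true means the
   component equals max{q_i1,q_i2}, false means min{q_i1,q_i2}. *)
Definition wbar (rk : {perm 'I_n}) (G0 : \bar R) (k : nat) (i : 'I_n) (b : bool) : R :=
  if (rk i < k)%N then (if b then theta G0 else 1 - theta G0)
  else (if b then 1 else 0).

Definition Tbar_tail (q : 'I_n -> 'I_2 -> R) (rk : {perm 'I_n}) (G0 : \bar R) (k : nat)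
  (c : R) : R :=
  \sum_(b : {ffun 'I_n -> bool} |
          c <= \sum_(i < n) (if b i then qmax q i else qmin q i))
     \prod_(i < n) wbar rk G0 k i (b i).

Definition pbar (q : 'I_n -> 'I_2 -> R) (rk : {perm 'I_n}) (z : assignment)
  (G0 : \bar R) (k : nat) : R :=
  Tbar_tail q rk G0 k (T q z).

Definition Gspace : set ('I_n -> \bar R) := [set G | forall i, (1 <= G i)%E].

Definition kth (G : 'I_n -> \bar R) (k : nat) : \bar R :=
  nth (+oo)%E (sort (fun x y : \bar R => (x <= y)%E) [seq G i | i <- enum 'I_n]) k.-1.

Definition Icount (G : 'I_n -> \bar R) (G0 : \bar R) : nat :=
  #|[set i | (G0 < G i)%E]|.

Definition S (G0 : \bar R) (k : nat) : set ('I_n -> \bar R) :=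
  [set G | Gspace G /\ (kth G k <= G0)%E].
Definition Sc (G0 : \bar R) (k : nat) : set ('I_n -> \bar R) := Gspace `\` S G0 k.

Definition interA (pv : \bar R -> nat -> R) (alpha : R) : set ('I_n -> \bar R) :=
  Gspace `&`
  \bigcap_(k in [set k : nat | (1 <= k <= n)%N])
    \bigcap_(G0 in [set G0 : \bar R | (1 <= G0)%E /\ pv G0 k <= alpha]) Sc G0 k.

Definition interB (pv : \bar R -> nat -> R) (alpha : R) : set ('I_n -> \bar R) :=
  Gspace `&`
  \bigcap_(G0 in [set G0 : \bar R | (1 <= G0)%E])
    \bigcap_(k in [set k : nat | (1 <= k <= n)%N /\ pv G0 k <= alpha]) Sc G0 k.

Definition interC (pv : \bar R -> nat -> R) (alpha : R) : set ('I_n -> \bar R) :=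
  Gspace `&`
  \bigcap_(x in [set x : \bar R * nat |
                  [/\ (1 <= x.1)%E, (1 <= x.2 <= n)%N & pv x.1 x.2 <= alpha]])
    Sc x.1 x.2.

End MatchedPairs.
Arguments interA {R} n pv alpha.
Arguments interB {R} n pv alpha.
Arguments interC {R} n pv alpha.

(* Write pbar_{Γ0;k} as the probability of the upward-closed event {Tbar >= T} under a
   product of Bernoulli laws that randomise, with success probability θ(Γ0) = Γ0/(1+Γ0),
   the k pairs with the smallest |q_i1 - q_i2| and fix the others at max{q_i1, q_i2}.
   Raising a success probability raises the probability of an upward-closed event, and so
   does moving the randomisation from a pair with a larger difference to one with a
   smaller difference.  Hence pbar is nondecreasing in Γ0 and nonincreasing in k, which
   makes all three intersections equal to {Γ : pbar_{Γ(k);k} > α for all k}; and, as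
   p*_ij <= θ(Γ*_i) and at least k pairs have Γ*_i <= Γ*_(k), P(T >= c) is at most
   P(Tbar(Γ*_(k);k) >= c).  If z0 minimises T among the assignments at which some
   pbar_{Γ*_(k);k} <= α, all of them satisfy T >= T(z0), so their probability is at most
   pbar_{Γ*_(k);k}(z0) <= α. *)

From HB Require Import structures.
From mathcomp Require Import all_boot all_order all_algebra fingroup perm.
From mathcomp Require Import boolp classical_sets constructive_ereal reals.
From mathcomp Require Import ring lra zify.
Set Implicit Arguments. Unset Strict Implicit.
Import Order.TTheory GRing.Theory Num.Theory.
Local Open Scope ring_scope.
Local Open Scope classical_set_scope.

Section BooleanProduct.
Variables (R : numDomainType) (n : nat).
Implicit Types (w : 'I_n -> bool -> R) (A : pred {ffun 'I_n -> bool}).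

Definition bprob w A : R := \sum_(b | A b) \prod_(i < n) w i (b i).

Definition upward_closed A : Prop :=
  forall b b' : {ffun 'I_n -> bool}, (forall i, b i -> b' i) -> A b -> A b'.

Lemma eq_bprob w w' A : w =2 w' -> bprob w A = bprob w' A.
Proof. by move=> ww'; apply: eq_bigr => b _; apply: eq_bigr => i _; rewrite ww'. Qed.

Definition flip_at (i0 : 'I_n) (b : {ffun 'I_n -> bool}) : {ffun 'I_n -> bool} :=
  [ffun i => if i == i0 then ~~ b i else b i].

Lemma flip_atK i0 : involutive (flip_at i0).
Proof. by move=> b; apply/ffunP => i; rewrite !ffunE; case: (i == i0); rewrite ?negbK. Qed.

Lemma sum_flip_at (F : {ffun 'I_n -> bool} -> R) i0 :
  \sum_b F b = \sum_(b : {ffun 'I_n -> bool} | b i0) (F b + F (flip_at i0 b)).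
Proof.
rewrite (bigID (fun b : {ffun 'I_n -> bool} => b i0)) /= big_split /=; congr (_ + _).
rewrite (reindex_inj (inv_inj (flip_atK i0))) /=.
by apply: eq_bigl => b; rewrite ffunE eqxx negbK.
Qed.

Lemma bprob_le_at w w' A i0 :
  (forall i b, 0 <= w i b) ->
  w i0 true + w i0 false = 1 -> w' i0 true + w' i0 false = 1 ->
  (forall i b, i != i0 -> w' i b = w i b) ->
  w i0 true <= w' i0 true -> upward_closed A -> bprob w A <= bprob w' A.
Proof.
move=> w_ge0 w1 w'1 ww' le_i0 upA.
(* Pair each [b] with [b i0] with its flip at [i0]: the two weights differ only at [i0],
   and [A] can hold at the flip only if it holds at [b]. *)
rewrite /bprob big_mkcond [X in _ <= X]big_mkcond /=.
rewrite (sum_flip_at _ i0) [X in _ <= X](sum_flip_at _ i0); apply: ler_sum => b b_i0.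
set P := \prod_(i < n | i != i0) w i (b i).
have P_ge0 : 0 <= P by apply: prodr_ge0 => i _.
have prod_b v : (forall i b, i != i0 -> v i b = w i b) ->
    \prod_(i < n) v i (b i) = v i0 true * P.
  move=> vw; rewrite (bigD1 i0) //= b_i0; congr (_ * _).
  by apply: eq_bigr => i ?; rewrite vw.
have prod_flip v : (forall i b, i != i0 -> v i b = w i b) ->
    \prod_(i < n) v i (flip_at i0 b i) = v i0 false * P.
  move=> vw; rewrite (bigD1 i0) //= ffunE eqxx b_i0; congr (_ * _).
  by apply: eq_bigr => i i_i0; rewrite ffunE (negbTE i_i0) vw.
rewrite !(prod_b w) // !(prod_flip w) // !(prod_b w') // !(prod_flip w') //.
case A_flip: (A (flip_at i0 b)).
  have -> : A b.
    apply: (upA (flip_at i0 b)) A_flip => i; rewrite ffunE.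
    by case: eqP => [->|//]; rewrite b_i0.
  by rewrite -!mulrDl w1 w'1.
by case: (A b); rewrite !addr0 // ler_wpM2r.
Qed.

Lemma bprob_le w w' A :
  (forall i b, 0 <= w i b) -> (forall i b, 0 <= w' i b) ->
  (forall i, w i true + w i false = 1) -> (forall i, w' i true + w' i false = 1) ->
  (forall i, w i true <= w' i true) -> upward_closed A -> bprob w A <= bprob w' A.
Proof.
move=> w_ge0 w'_ge0 w1 w'1 le_ww' upA.
(* Hybrid argument: replace [w] by [w'] one coordinate at a time. *)
pose hyb m (i : 'I_n) b := if (i < m)%N then w' i b else w i b.
have hyb_le m : bprob w A <= bprob (hyb m) A.
  elim: m => [|m IH]; first by rewrite (@eq_bprob _ w) // => i b; rewrite /hyb ltn0.
  apply: le_trans IH _; have [m_n|n_m] := ltnP m n; last first.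
    rewrite le_eqVlt (@eq_bprob _ (hyb m)) ?eqxx // => i b.
    by rewrite /hyb !(leq_trans (ltn_ord i)) // ltnW.
  apply: (bprob_le_at (i0 := Ordinal m_n)) => //=; rewrite /hyb /= ?ltnn ?ltnSn //.
  - by move=> i b; case: ifP.
  - by move=> i b; rewrite -val_eqE ltnS leq_eqVlt /= => /negbTE ->.
by apply: le_trans (hyb_le n) _; rewrite (@eq_bprob _ w') // => i b; rewrite /hyb ltn_ord.
Qed.

Lemma bprob_dirac_true w A :
  (forall i, w i true = 1) -> (forall i, w i false = 0) -> A [ffun=> true] -> bprob w A = 1.
Proof.
move=> w1 w0 A1; rewrite /bprob (bigD1 [ffun=> true]) //= [X in _ + X]big1 ?addr0.
  by apply: big1 => i _; rewrite ffunE w1.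
move=> b /andP[_ b_true]; have [i /negbTE bi|all_b] := pickP (fun i => ~~ b i).
  by rewrite (bigD1 i) //= bi w0 mul0r.
case/eqP: b_true; apply/ffunP => i; rewrite ffunE.
by have := all_b i; case: (b i).
Qed.

End BooleanProduct.

Section TbarLaw.
Variables (R : realType) (n : nat) (q : 'I_n -> 'I_2 -> R).

Definition Tbar_value (b : {ffun 'I_n -> bool}) : R :=
  \sum_(i < n) (if b i then qmax q i else qmin q i).

Definition Tbar_ge (c : R) : pred {ffun 'I_n -> bool} := fun b => c <= Tbar_value b.

Definition bern_on (th : R) (S : {set 'I_n}) (i : 'I_n) (b : bool) : R :=
  if i \in S then (if b then th else 1 - th) else (if b then 1 else 0).

Lemma qmin_le_qmax i : qmin q i <= qmax q i.
Proof. by rewrite ge_min le_max lexx. Qed.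

Lemma upward_Tbar_ge c : upward_closed (Tbar_ge c).
Proof.
move=> b b' le_bb'; rewrite /Tbar_ge => /le_trans; apply; apply: ler_sum => i _.
case bi: (b i); first by rewrite le_bb'.
by case: (b' i); rewrite ?qmin_le_qmax.
Qed.

Lemma bern_on_ge0 th S i b : 0 <= th <= 1 -> 0 <= bern_on th S i b.
Proof. by case/andP=> ? ?; rewrite /bern_on; case: ifP; case: b; rewrite ?subr_ge0. Qed.

Lemma bern_on_sum1 th S i : bern_on th S i true + bern_on th S i false = 1.
Proof. by rewrite /bern_on; case: ifP; rewrite ?addr0 // addrC subrK. Qed.

Lemma bprob_bern_on_le_th th th' S c :
  0 <= th <= 1 -> 0 <= th' <= 1 -> th <= th' ->
  bprob (bern_on th S) (Tbar_ge c) <= bprob (bern_on th' S) (Tbar_ge c).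
Proof.
move=> th01 th'01 le_th; apply: bprob_le => *; rewrite ?bern_on_ge0 ?bern_on_sum1 //.
  by rewrite /bern_on; case: ifP.
exact: upward_Tbar_ge.
Qed.

Lemma bprob_bern_on_subset th (S S' : {set 'I_n}) c :
  0 <= th <= 1 -> S \subset S' ->
  bprob (bern_on th S') (Tbar_ge c) <= bprob (bern_on th S) (Tbar_ge c).
Proof.
move=> /andP[th0 th1] /fintype.subsetP sub_SS'; apply: bprob_le => [i b|i b|i|i|i|].
- by rewrite bern_on_ge0 ?th0.
- by rewrite bern_on_ge0 ?th0.
- exact: bern_on_sum1.
- exact: bern_on_sum1.
- by rewrite /bern_on; have [/sub_SS' ->|_] := boolP (i \in S); last case: ifP.
- exact: upward_Tbar_ge.
Qed.

Lemma Tbar_value_tperm (b : {ffun 'I_n -> bool}) i j :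
  i != j -> b i -> qmax q j - qmin q j <= qmax q i - qmin q i ->
  Tbar_value [ffun x => b (tperm i j x)] <= Tbar_value b.
Proof.
move=> ij bi le_ji; rewrite -subr_ge0 /Tbar_value -sumrB (bigD1 i) //= (bigD1 j) 1?eq_sym //=.
rewrite big1 => [|x /andP[xi xj]]; last by rewrite ffunE tpermD 1?eq_sym // subrr.
rewrite !ffunE tpermL tpermR bi addr0; case: (b j); lra.
Qed.

Lemma bprob_bern_on_swap th (S : {set 'I_n}) i j c :
  0 <= th <= 1 -> i \in S -> j \notin S ->
  qmax q j - qmin q j <= qmax q i - qmin q i ->
  bprob (bern_on th S) (Tbar_ge c) <= bprob (bern_on th (j |: (S :\ i))) (Tbar_ge c).
Proof.
move=> th01 iS jS le_ji; set S' := j |: (S :\ i).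
have ij : i != j by apply: contraNneq jS => <-.
(* Reindex by the transposition (i j): when [b i] holds the swap can only lower
   [Tbar_value]; otherwise [b] has weight zero under the new set. *)
pose h (b : {ffun 'I_n -> bool}) : {ffun 'I_n -> bool} := [ffun x => b (tperm i j x)].
have hK : involutive h by move=> b; apply/ffunP => x; rewrite !ffunE tpermK.
have mem_tperm x : (tperm i j x \in S) = (x \in S').
  rewrite !inE; case: tpermP => [->|->|/eqP xi /eqP xj].
  - by rewrite (negbTE jS) (negbTE ij) eqxx.
  - by rewrite iS eqxx.
  - by rewrite (negbTE xj) xi.
have weight_h b : \prod_(x < n) bern_on th S x (h b x) = \prod_(x < n) bern_on th S' x (b x).
  rewrite (reindex_inj (@perm_inj _ (tperm i j))) /=.
  by apply: eq_bigr => x _; rewrite ffunE tpermK /bern_on mem_tperm.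
rewrite /bprob (reindex_inj (inv_inj hK)) /= big_mkcond [X in _ <= X]big_mkcond /=.
apply: ler_sum => b _; rewrite weight_h.
have [bi|/negbTE bi] := boolP (b i).
  case: ifP => [Ahb|_]; last by case: ifP => // _; apply: prodr_ge0 => *; exact: bern_on_ge0.
  by rewrite ifT //; apply: le_trans Ahb _; exact: Tbar_value_tperm.
have -> : \prod_(x < n) bern_on th S' x (b x) = 0.
  by rewrite (bigD1 i) //= bi /bern_on !inE eqxx (negbTE ij) mul0r.
by case: ifP; case: ifP.
Qed.

Lemma bprob_bern_on_le_low th (L K : {set 'I_n}) c :
  0 <= th <= 1 ->
  (forall i j, i \notin L -> j \in L -> qmax q j - qmin q j <= qmax q i - qmin q i) ->
  #|K| = #|L| -> bprob (bern_on th K) (Tbar_ge c) <= bprob (bern_on th L) (Tbar_ge c).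
Proof.
move=> th01 L_low; move: {2}#|K :\: L| (erefl #|K :\: L|) => m.
elim: m K => [|m IH] K KL_card K_card.
  have sub_KL : K \subset L by rewrite -finset.setD_eq0 -cards_eq0 KL_card.
  by rewrite (_ : K = L) //; apply/eqP; rewrite eqEcard sub_KL K_card leqnn.
have /card_gt0P[i] : (0 < #|K :\: L|)%N by rewrite KL_card.
rewrite inE => /andP[iL iK].
have /card_gt0P[j] : (0 < #|L :\: K|)%N by rewrite cardsD finset.setIC -K_card -cardsD KL_card.
rewrite inE => /andP[jK jL].
apply: le_trans (bprob_bern_on_swap c th01 iK jK (L_low i j iL jL)) (IH _ _ _).
  have -> : (j |: (K :\ i)) :\: L = (K :\: L) :\ i.
    by apply/setP => x; rewrite !inE; case: eqVneq => [->|]; rewrite ?jL ?andbF // andbCA.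
  by apply/eqP; rewrite -eqSS -KL_card (cardsD1 i (K :\: L)) !inE iL iK.
by rewrite cardsU1 !inE (negbTE jK) andbF /= add1n -K_card (cardsD1 i K) iK.
Qed.

End TbarLaw.

Lemma Tbar_tailE (R : realType) n (q : 'I_n -> 'I_2 -> R) rk G0 k c :
  Tbar_tail q rk G0 k c = bprob (bern_on (theta G0) [set i | (rk i < k)%N]) (Tbar_ge q c).
Proof. by apply: eq_bprob => i b; rewrite /wbar /bern_on inE. Qed.

Lemma ord2_cases (j : 'I_2) : j = ord0 \/ j = ord_max.
Proof. by case: j => [[|[|//]] ?]; [left|right]; apply: val_inj. Qed.

Section Theta.
Variable R : realType.
Implicit Types G : \bar R.

Lemma theta_in01 G : (1 <= G)%E -> 0 <= theta G <= 1.
Proof.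
case: G => [g| |] //=; last by rewrite lexx ler01.
rewrite lee_fin => g1; have g1_gt0 : 0 < 1 + g by lra.
by rewrite divr_ge0 ?ler_pdivrMr //=; lra.
Qed.

Lemma theta_le G G' : (1 <= G)%E -> (G <= G')%E -> theta G <= theta G'.
Proof.
move=> G1 GG'; have /andP[_ th1] := theta_in01 G1.
case: G' GG' => [g'| |] //=; last by move/(le_trans G1).
case: G G1 th1 => [g| |] //=; rewrite !lee_fin => g1 _ gg'.
have g1_gt0 : 0 < 1 + g by lra.
have g'1_gt0 : 0 < 1 + g' by lra.
by rewrite ler_pdivrMr // mulrAC ler_pdivlMr //; nra.
Qed.

End Theta.

Section GammaStar.
Variables (R : realType) (n : nat) (p : 'I_n -> 'I_2 -> R).
Hypothesis p_mech : is_mechanism p.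

Lemma mechanism_ge0 i j : 0 <= p i j.
Proof. by case: p_mech. Qed.

Lemma mechanism_pair_sum i : p i ord0 + p i ord_max = 1.
Proof.
case: p_mech => _ /(_ i); rewrite big_ord_recl big_ord1.
by congr (_ + p i _ = 1); apply: val_inj.
Qed.

Lemma gamma_star_ge1 i : (1 <= gamma_star p i)%E.
Proof.
rewrite /gamma_star /=; case: eqP => [_|mn_neq0]; first exact: leey.
have mn_gt0 : 0 < Num.min (p i ord0) (p i ord_max).
  by rewrite lt_def le_min !mechanism_ge0 !andbT; apply/eqP.
by rewrite lee_fin ler_pdivlMr // mul1r ge_min le_max lexx.
Qed.

Lemma mechanism_le_theta i j : p i j <= theta (gamma_star p i).
Proof.
have pij_le : p i j <= Num.max (p i ord0) (p i ord_max).
  by rewrite le_max; case: (ord2_cases j) => ->; rewrite lexx ?orbT.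
rewrite /gamma_star /=; case: eqP => [_|/eqP mn_neq0] /=.
  by apply: le_trans pij_le _; rewrite -(mechanism_pair_sum i) ge_max lerDl lerDr !mechanism_ge0.
have := addr_min_max (p i ord0) (p i ord_max); rewrite mechanism_pair_sum.
set mn := Num.min _ _ in mn_neq0 *; set mx := Num.max _ _ in pij_le * => mn_mx.
suff -> : mx / mn / (1 + mx / mn) = mx by [].
have -> : mx = 1 - mn by rewrite -mn_mx addrC addKr.
by field; rewrite mn_neq0 addrC subrK oner_neq0.
Qed.

End GammaStar.

Lemma sorted_nth_le_count d (T : porderType d) (x0 a : T) (s : seq T) j :
  sorted <=%O s -> (j < size s)%N ->
  (nth x0 s j <= a)%O = (j < count (fun x => x <= a)%O s)%N.
Proof.
elim: s j => [//|x s IH] j /= x_s.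
have x_le : all (fun y => x <= y)%O s by apply: order_path_min x_s; exact: le_trans.
have count0 : ~~ (x <= a)%O -> count (fun y => y <= a)%O s = 0%N.
  move=> x_a; apply/eqP; rewrite -leqn0 leqNgt -has_count; apply/hasPn => y y_s.
  by apply: contraNN x_a; apply: le_trans; exact: (allP x_le).
case: j => [_|j] /=.
  by case x_a: (x <= a)%O; rewrite //= count0 ?x_a.
rewrite ltnS => j_s; case x_a: (x <= a)%O => /=.
  by rewrite add1n ltnS IH // (path_sorted x_s).
rewrite add0n count0 ?x_a // ltn0; apply: contraFF x_a => /(le_trans _); apply.
by apply: (allP x_le); exact: mem_nth.
Qed.

Section OrderStatistics.
Variables (R : realType) (n : nat).
Implicit Types (G : 'I_n -> \bar R).

Lemma size_kth_seq G :
  size (sort (fun x y : \bar R => (x <= y)%E) [seq G i | i <- enum 'I_n]) = n.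
Proof. by rewrite size_sort size_map size_enum_ord. Qed.

Lemma kth_mem G k : (1 <= k <= n)%N -> exists i, kth G k = G i.
Proof.
case: k => [//|k] /= k_n.
have : kth G k.+1 \in sort (fun x y : \bar R => (x <= y)%E) [seq G i | i <- enum 'I_n].
  by apply: mem_nth; rewrite size_kth_seq.
by rewrite mem_sort => /mapP[i _ ->]; exists i.
Qed.

Lemma kth_ge1 G k : Gspace G -> (1 <= k <= n)%N -> (1 <= kth G k)%E.
Proof. by move=> G_ge1 /(kth_mem G)[i ->]. Qed.

Lemma kth_leE G (G0 : \bar R) k :
  (1 <= k <= n)%N -> (kth G k <= G0)%E = (k <= #|[pred i | (G i <= G0)%E]|)%N.
Proof.
case: k => [//|k] /= k_n.
rewrite /kth sorted_nth_le_count ?size_kth_seq //; last by apply: sort_sorted; exact: le_total.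
by rewrite count_sort count_map enumT cardE /enum_mem size_filter.
Qed.

Lemma card_le_add_Icount G (G0 : \bar R) : (#|[pred i | (G i <= G0)%E]| + Icount G G0)%N = n.
Proof.
rewrite -[RHS](card_ord n) -(cardC [pred i | (G i <= G0)%E]); congr (_ + _)%N.
by apply: eq_card => i; rewrite !inE -ltNge; apply/asboolP/idP.
Qed.

Lemma kth_witness G k :
  (1 <= k <= n)%N -> exists K : {set 'I_n}, #|K| = k /\ forall i, i \in K -> (G i <= kth G k)%E.
Proof.
move=> k_n; have := lexx (kth G k); rewrite kth_leE // => /card_geqP[s [s_uniq s_size s_le]].
exists [set i in s]; split; first by rewrite cardsE (card_uniqP s_uniq).
by move=> i; rewrite inE => /s_le.
Qed.

End OrderStatistics.

Lemma card_rank_lt n (rk : {perm 'I_n}) k : (k <= n)%N -> #|[set i | (rk i < k)%N]%SET| = k.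
Proof.
move=> k_n; have -> : [set i | (rk i < k)%N]%SET = rk @^-1: [set j : 'I_n | (j < k)%N]%SET.
  by apply/setP => i; rewrite !inE.
rewrite card_preimset; last exact: perm_inj.
have -> : [set j : 'I_n | (j < k)%N]%SET = [set widen_ord k_n x | x in 'I_k]%SET.
  apply/setP => j; rewrite inE; apply/idP/imsetP => [j_k|[x _ ->]]; last exact: (ltn_ord x).
  by exists (Ordinal j_k) => //; apply: val_inj.
by rewrite card_imset ?card_ord // => x y /(congr1 val) xy; apply: val_inj.
Qed.

Lemma max_sub_min (R : realDomainType) (a b : R) : Num.max a b - Num.min a b = `|a - b|.
Proof. by case: lerP => ?; rewrite // distrC. Qed.

Section PValue.
Variables (R : realType) (n : nat) (q : 'I_n -> 'I_2 -> R) (rk : {perm 'I_n}) (z : assignment n).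

Lemma pbar_le_Gamma G0 G1 k :
  (1 <= G0)%E -> (G0 <= G1)%E -> pbar q rk z G0 k <= pbar q rk z G1 k.
Proof.
move=> G0_ge1 G01; rewrite /pbar !Tbar_tailE; apply: bprob_bern_on_le_th.
- exact: theta_in01.
- exact: theta_in01 (le_trans G0_ge1 G01).
- exact: theta_le.
Qed.

Lemma pbar_ge_k G0 k k' :
  (1 <= G0)%E -> (k <= k')%N -> pbar q rk z G0 k' <= pbar q rk z G0 k.
Proof.
move=> G0_ge1 kk'; rewrite /pbar !Tbar_tailE; apply: bprob_bern_on_subset.
  exact: theta_in01.
by apply/fintype.subsetP => i; rewrite !inE => /leq_trans; apply.
Qed.

Lemma T_le_Tbar_max : T q z <= Tbar_value q [ffun=> true].
Proof.
apply: ler_sum => i _; rewrite ffunE le_max.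
by case: (ord2_cases (z i)) => ->; rewrite lexx ?orbT.
Qed.

Lemma pbar0 G0 : pbar q rk z G0 0 = 1.
Proof.
rewrite /pbar Tbar_tailE; apply: bprob_dirac_true => [i|i|]; rewrite /bern_on ?inE //.
exact: T_le_Tbar_max.
Qed.

End PValue.

Section Randomization.
Variables (R : realType) (n : nat) (q : 'I_n -> 'I_2 -> R).

Definition qarg (i : 'I_n) (b : bool) : 'I_2 :=
  if b == (q i ord0 <= q i ord_max) then ord_max else ord0.

Definition assign_of (b : {ffun 'I_n -> bool}) : assignment n := [ffun i => qarg i (b i)].

Lemma q_qarg i b : q i (qarg i b) = if b then qmax q i else qmin q i.
Proof. by rewrite /qarg /qmax /qmin; case: leP; case: b. Qed.

Lemma qargK i (j : 'I_2) : qarg i (j == qarg i true) = j.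
Proof. by rewrite /qarg; case: leP => _; case: (ord2_cases j) => ->. Qed.

Lemma assign_of_bij : bijective assign_of.
Proof.
exists (fun z : assignment n => [ffun i => z i == qarg i true]) => [b|z].
  by apply/ffunP => i; rewrite !ffunE /qarg; case: (b i); case: leP.
by apply/ffunP => i; rewrite !ffunE qargK.
Qed.

Lemma T_assign_of b : T q (assign_of b) = Tbar_value q b.
Proof. by apply: eq_bigr => i _; rewrite ffunE q_qarg. Qed.

Lemma prob_T_ge (p : 'I_n -> 'I_2 -> R) c :
  prob p (fun z => c <= T q z) = bprob (fun i b => p i (qarg i b)) (Tbar_ge q c).
Proof.
rewrite /prob (reindex assign_of); last first.
  by case: assign_of_bij => g fg gf; exists g.
apply: eq_big => [b|b _]; first by rewrite asboolb T_assign_of.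
by apply: eq_bigr => i _; rewrite ffunE.
Qed.

Lemma mechanism_qarg_sum (p : 'I_n -> 'I_2 -> R) i :
  is_mechanism p -> p i (qarg i true) + p i (qarg i false) = 1.
Proof.
move=> p_mech; rewrite -(mechanism_pair_sum p_mech i) /qarg.
by case: (_ <= _); rewrite // addrC.
Qed.

End Randomization.

Section Probability.
Variables (R : realType) (n : nat) (p : 'I_n -> 'I_2 -> R).
Hypothesis p_mech : is_mechanism p.

Lemma prob_le (E1 E2 : assignment n -> Prop) :
  (forall z, E1 z -> E2 z) -> prob p E1 <= prob p E2.
Proof.
move=> E12; rewrite /prob big_mkcond [X in _ <= X]big_mkcond /=; apply: ler_sum => z _.
have w_ge0 : 0 <= \prod_(i < n) p i (z i) by apply: prodr_ge0 => i _; exact: mechanism_ge0.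
case: (asboolP (E1 z)) => [/E12 E2z|_]; first by rewrite asboolT.
by case: (asboolP (E2 z)).
Qed.

Lemma probN (E : assignment n -> Prop) : prob p (fun z => ~ E z) = 1 - prob p E.
Proof.
have prob_all : \sum_(z : assignment n) \prod_(i < n) p i (z i) = 1.
  rewrite -(bigA_distr_bigA (fun i (j : 'I_2) => p i j)) /=.
  by apply: big1 => i _; case: p_mech => _; apply.
rewrite /prob -[X in X - _]prob_all [X in X - _](bigID (fun z => `[< E z >])) /=.
rewrite [X in X - _]addrC addrK.
by apply: eq_bigl => z; rewrite asbool_neg.
Qed.

Lemma prob_T_ge_le_Tbar_tail q rk k c :
  ordered_by_absdiff q rk -> (1 <= k <= n)%N ->
  prob p (fun z => c <= T q z) <= Tbar_tail q rk (kth (gamma_star p) k) k c.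
Proof.
move=> q_ord k_n; set G := kth _ k.
have G_ge1 : (1 <= G)%E by apply: kth_ge1 => // i; exact: gamma_star_ge1.
have th01 := theta_in01 G_ge1.
have [K [K_card K_le]] := kth_witness (gamma_star p) k_n.
rewrite prob_T_ge Tbar_tailE.
apply: (@le_trans _ _ (bprob (bern_on (theta G) K) (Tbar_ge q c))).
  apply: bprob_le => [i b|i b|i|i|i|]; rewrite ?bern_on_ge0 ?bern_on_sum1 //.
  - exact: mechanism_ge0.
  - exact: mechanism_qarg_sum.
  - rewrite /bern_on; case: ifP => [/K_le iK|_]; last first.
      by rewrite -(mechanism_qarg_sum q i p_mech) lerDl mechanism_ge0.
    apply: le_trans (mechanism_le_theta p_mech _ _) (theta_le _ iK).
    exact: gamma_star_ge1.
  - exact: upward_Tbar_ge.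
apply: bprob_bern_on_le_low => //; last by rewrite K_card card_rank_lt //; case/andP: k_n.
move=> i j; rewrite !inE -leqNgt => k_i j_k; rewrite !max_sub_min.
by apply: q_ord; apply: leq_trans j_k k_i.
Qed.

Lemma simultaneous_coverage q rk alpha :
  ordered_by_absdiff q rk -> 0 < alpha < 1 ->
  1 - alpha <= prob p (fun z => forall k, (1 <= k <= n)%N ->
                               alpha < pbar q rk z (kth (gamma_star p) k) k).
Proof.
move=> q_ord /andP[alpha_gt0 _]; set E := fun z => _.
rewrite lerBlDl -lerBlDr -probN.
have [[z1 z1_bad]|no_bad] := pselect (exists z, ~ E z); last first.
  by rewrite /prob big_pred0 ?ltW // => z; apply/asboolP => bad; apply: no_bad; exists z.
have [z0 /asboolP z0_bad z0_min] :=
  @arg_minP _ _ _ z1 (fun z => `[< ~ E z >]) (T q) (asboolT z1_bad).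
have [k [k_n pk_le]] : exists k, (1 <= k <= n)%N /\
    pbar q rk z0 (kth (gamma_star p) k) k <= alpha.
  apply: contra_notP z0_bad => all_gt k k_n; rewrite ltNge; apply/negP => pk_le.
  by apply: all_gt; exists k.
apply: le_trans pk_le; apply: le_trans (prob_T_ge_le_Tbar_tail (T q z0) q_ord k_n).
by apply: prob_le => z z_bad; apply: z0_min; apply/asboolP.
Qed.

End Probability.

Section ConfidenceSets.
Variables (R : realType) (n : nat) (pv : \bar R -> nat -> R) (alpha : R).

Definition rejected G0 k := [/\ (1 <= G0)%E, (1 <= k <= n)%N & pv G0 k <= alpha].

Definition conf_set : set ('I_n -> \bar R) :=
  [set G | Gspace G /\ forall G0 k, rejected G0 k -> ~ (kth G k <= G0)%E].

Lemma ScE G0 k (G : 'I_n -> \bar R) : Sc G0 k G <-> Gspace G /\ ~ (kth G k <= G0)%E.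
Proof.
split=> [[G_ge1 nS]|[G_ge1 nle]]; split=> //; first by move=> le; apply: nS.
by case.
Qed.

Lemma interA_conf : interA n pv alpha = conf_set.
Proof.
apply/seteqP; split=> G [G_ge1 SG]; split=> //.
  by move=> G0 k [G0_ge1 k_n pv_le]; have /ScE[] := SG k k_n G0 (conj G0_ge1 pv_le).
by move=> k k_n G0 [G0_ge1 pv_le]; apply/ScE; split=> //; apply: SG.
Qed.

Lemma interB_conf : interB n pv alpha = conf_set.
Proof.
apply/seteqP; split=> G [G_ge1 SG]; split=> //.
  by move=> G0 k [G0_ge1 k_n pv_le]; have /ScE[] := SG G0 G0_ge1 k (conj k_n pv_le).
by move=> G0 G0_ge1 k [k_n pv_le]; apply/ScE; split=> //; apply: SG.
Qed.

Lemma interC_conf : interC n pv alpha = conf_set.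
Proof.
apply/seteqP; split=> G [G_ge1 SG]; split=> //.
  by move=> G0 k rej; have /ScE[] := SG (G0, k) rej.
by move=> [G0 k] rej; apply/ScE; split=> //; apply: SG.
Qed.

End ConfidenceSets.
Arguments conf_set {R} n pv alpha.

Section PValueConfidenceSets.
Variables (R : realType) (n : nat) (q : 'I_n -> 'I_2 -> R) (rk : {perm 'I_n}).
Variables (z : assignment n) (alpha : R).

Lemma conf_set_kthE :
  conf_set n (pbar q rk z) alpha =
  [set G | Gspace G /\ forall k, (1 <= k <= n)%N -> alpha < pbar q rk z (kth G k) k].
Proof.
apply/seteqP; split=> G /= [G_ge1 SG]; split=> //.
  move=> k k_n; rewrite ltNge; apply/negP => pv_le.
  exact: SG (kth G k) k (And3 (kth_ge1 G_ge1 k_n) k_n pv_le) (lexx _).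
move=> G0 k [G0_ge1 k_n pv_le] le_G0; have := SG k k_n; rewrite ltNge => /negP; apply.
exact: le_trans (pbar_le_Gamma q rk z k (kth_ge1 G_ge1 k_n) le_G0) pv_le.
Qed.

Lemma conf_set_IcountE :
  alpha < 1 ->
  conf_set n (pbar q rk z) alpha =
  [set G | Gspace G /\ forall G0, (1 <= G0)%E ->
      exists k, [/\ (k <= n)%N, Icount G G0 = (n - k)%N & alpha < pbar q rk z G0 k]].
Proof.
move=> alpha_lt1; apply/seteqP; split=> G /= [G_ge1 SG]; split=> //.
  move=> G0 G0_ge1; have card_sum := card_le_add_Icount G G0.
  set m := #|_| in card_sum; exists m; split; [lia|lia|].
  have [->|m_gt0] := posnP m; first by rewrite pbar0.
  rewrite ltNge; apply/negP => pv_le.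
  by apply: (SG G0 m); [split=> //; lia|rewrite kth_leE //; lia].
move=> G0 k [G0_ge1 k_n pv_le] le_G0; have [k' [k'_n Icount_k' pv_gt]] := SG G0 G0_ge1.
have k_k' : (k <= k')%N.
  by have := card_le_add_Icount G G0; rewrite kth_leE // in le_G0; lia.
by have := pbar_ge_k q rk z G0_ge1 k_k'; rewrite leNgt (le_lt_trans pv_le pv_gt).
Qed.

End PValueConfidenceSets.

Unset Implicit Arguments.

Theorem theorem3 (R : realType) (n : nat)
  (p : 'I_n -> 'I_2 -> R)
  (Y0 Y1 : 'I_n -> 'I_2 -> R)
  (qf : ('I_n -> 'I_2 -> R) -> 'I_n -> 'I_2 -> R)
  (rk : {perm 'I_n}) (alpha : R) :
  is_mechanism p ->
  Y1 = Y0 ->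
  ordered_by_absdiff (qf Y0) rk ->
  0 < alpha < 1 ->
  (forall z : assignment n,
     let pv := pbar (qf Y0) rk z in
     [/\ interA n pv alpha = interB n pv alpha,
         interB n pv alpha = interC n pv alpha,
         interA n pv alpha =
           [set G | Gspace G /\
              forall k, (1 <= k <= n)%N -> alpha < pv (kth G k) k]
       & interB n pv alpha =
           [set G | Gspace G /\
              forall G0, (1 <= G0)%E ->
                exists k, [/\ (k <= n)%N, Icount G G0 = (n - k)%N & alpha < pv G0 k]]])
  /\ 1 - alpha <= prob p (fun z => interC n (pbar (qf Y0) rk z) alpha (gamma_star p))
  /\ 1 - alpha <= prob p (fun z => forall k, (1 <= k <= n)%N ->
                             alpha < pbar (qf Y0) rk z (kth (gamma_star p) k) k).
Proof.
(* Under Fisher's null [T] reads the fixed responses [qf Y0]. *)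
move=> p_mech _ q_ord alpha01; have /andP[_ alpha_lt1] := alpha01.
have coverage := simultaneous_coverage p_mech q_ord alpha01.
split.
  move=> z /=; rewrite interA_conf interB_conf interC_conf.
  by split=> //; [exact: conf_set_kthE | exact: conf_set_IcountE].
split=> //; apply: le_trans coverage (prob_le p_mech _) => z cover.
by rewrite interC_conf conf_set_kthE; split=> //; apply: gamma_star_ge1.
Qed.
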